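(* Let $Y=(Y_{ij})$ be a $3\times 3$ real symmetric positive definite Minkowski-reduced matrix. Put $$c_1=\min\bigl(Y_{11}-Y_{12}-|Y_{13}|,\ Y_{22}-Y_{21}-Y_{23},\ Y_{33}-Y_{32}-|Y_{31}|\bigr),\qquad c=\max\Bigl(c_1,\ \tfrac{1}{100}Y_{11}\Bigr).$$ Then for all $n\in\mathbb{R}^3$ we have ${}^t n\, Y\, n\ \ge\ c\,{}^t n\, n$.
   Context: A real symmetric positive definite $g\times g$ matrix $Y$ is Minkowski-reduced if (a) for all $j=1,\dots,g$ and all $v=(v_1,\dots,v_g)\in\mathbb{Z}^g$ with $\gcd(v_j,\dots,v_g)=1$ one has ${}^t v Y v\ge Y_{jj}$, and (b) for all $j=1,\dots,g-1$ one has $Y_{j,j+1}\ge 0$. *)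

From HB Require Import structures.
From mathcomp Require Import all_boot all_order all_algebra.
Set Implicit Arguments. Unset Strict Implicit. Unset Printing Implicit Defensive.
Import Order.TTheory GRing.Theory Num.Theory.
Local Open Scope ring_scope.

Definition qform (R : realFieldType) (g : nat) (Y : 'M[R]_g) (n : 'cV[R]_g) : R :=
  (n^T *m Y *m n) 0 0.

Definition is_symmetric_mx (R : realFieldType) (g : nat) (Y : 'M[R]_g) : Prop :=
  Y^T = Y.

Definition posdefmx (R : realFieldType) (g : nat) (Y : 'M[R]_g) : Prop :=
  forall n : 'cV[R]_g, n != 0 -> 0 < qform Y n.

(* gcd(v_j, ..., v_g) (0-based indices j..g-1) *)
Definition gcd_from (g : nat) (j : 'I_g) (v : 'cV[int]_g) : int :=
  \big[gcdz/0]_(k : 'I_g | (j <= k)%N) v k 0.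

Definition minkowski_reduced (R : realFieldType) (g : nat) (Y : 'M[R]_g) : Prop :=
  (forall (j : 'I_g) (v : 'cV[int]_g),
      gcd_from j v = 1 -> Y j j <= qform Y (map_mx (fun z : int => z%:~R) v))
  /\ (forall i j : 'I_g, nat_of_ord j = (nat_of_ord i).+1 -> 0 <= Y i j).

Definition i0 : 'I_3 := @Ordinal 3 0 isT.
Definition i1 : 'I_3 := @Ordinal 3 1 isT.
Definition i2 : 'I_3 := @Ordinal 3 2 isT.

From HB Require Import structures.
From mathcomp Require Import all_boot all_order all_algebra.
From mathcomp Require Import ring lra.
Import Order.TTheory GRing.Theory Num.Theory.
Set Implicit Arguments.
Unset Strict Implicit.
Unset Printing Implicit Defensive.
Local Open Scope ring_scope.

(* Write the form as a x^2 + b y^2 + c z^2 + 2 d x y + 2 e x z + 2 f y z.  The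
   bound by c1 is diagonal dominance: 2 s u v >= -|s| (u^2 + v^2).  For the bound
   by a/100, minimality on a handful of short integer vectors yields a <= b <= c,
   2|d|, 2|e| <= a, 2|f| <= b and 2(d - e + f) <= a + b; these force
   det Y >= abc/4, which is enough to keep the shifted form Y - (a/100) I
   positive by Sylvester's criterion. *)

Section TernaryForms.

Variable R : realFieldType.
Implicit Types a b c d e f k m s x y z : R.

Definition ternary_form a b c d e f x y z : R :=
  a * x ^+ 2 + b * y ^+ 2 + c * z ^+ 2 + 2 * d * x * y + 2 * e * x * z + 2 * f * y * z.

Definition ternary_det a b c d e f : R :=
  a * b * c + 2 * d * e * f - a * f ^+ 2 - b * e ^+ 2 - c * d ^+ 2.

(* Sylvester's criterion, by completing the squares. *)
Lemma ternary_form_ge0 a b c d e f x y z :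
  0 < a -> 0 < a * b - d ^+ 2 -> 0 <= ternary_det a b c d e f ->
  0 <= ternary_form a b c d e f x y z.
Proof.
move=> a_gt0 m_gt0 det_ge0; set m := a * b - d ^+ 2 in m_gt0 *.
have -> : ternary_form a b c d e f x y z =
    (m * (a * x + d * y + e * z) ^+ 2 + (m * y + (a * f - d * e) * z) ^+ 2
     + a * ternary_det a b c d e f * z ^+ 2) / (a * m).
  by rewrite /ternary_form /ternary_det /m; field; rewrite !gt_eqF.
have [a_ge0 m_ge0] := (ltW a_gt0, ltW m_gt0).
apply: divr_ge0; last exact: mulr_ge0.
by rewrite !addr_ge0 ?sqr_ge0 //; apply: mulr_ge0; rewrite ?sqr_ge0 ?mulr_ge0.
Qed.

Lemma ternary_form_shift a b c d e f k x y z :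
  ternary_form a b c d e f x y z - k * (x ^+ 2 + y ^+ 2 + z ^+ 2) =
  ternary_form (a - k) (b - k) (c - k) d e f x y z.
Proof. by rewrite /ternary_form; ring. Qed.

Lemma mul2_ge_norm s x z : - (`|s| * (x ^+ 2 + z ^+ 2)) <= 2 * s * x * z.
Proof.
have [s_ge0 | s_lt0] := lerP 0 s.
  by rewrite ger0_norm //; have := mulr_ge0 s_ge0 (sqr_ge0 (x + z)); lra.
rewrite ltr0_norm //; have : 0 <= - s by lra.
by move/mulr_ge0/(_ (sqr_ge0 (x - z))); lra.
Qed.

Lemma ternary_form_ge_diag a b c d e f m x y z :
  0 <= d -> 0 <= f ->
  m <= a - d - `|e| -> m <= b - d - f -> m <= c - f - `|e| ->
  m * (x ^+ 2 + y ^+ 2 + z ^+ 2) <= ternary_form a b c d e f x y z.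
Proof.
move=> d_ge0 f_ge0 ma mb mc; rewrite /ternary_form.
have := mul2_ge_norm d x y; rewrite ger0_norm //.
have := mul2_ge_norm f y z; rewrite ger0_norm //.
have := mul2_ge_norm e x z.
have := ler_wpM2r (sqr_ge0 x) ma; have := ler_wpM2r (sqr_ge0 y) mb.
have := ler_wpM2r (sqr_ge0 z) mc; lra.
Qed.

(* Consequences of Minkowski reduction for a ternary form; they come from the
   minimality conditions for e_2, e_3, e_2 - e_1, e_3 +- e_1, e_3 - e_2 and
   e_3 - e_2 + e_1. *)
Record reduced3 a b c d e f : Prop := Reduced3 {
  reduced3_a_gt0 : 0 < a;
  reduced3_ab : a <= b;
  reduced3_bc : b <= c;
  reduced3_d_ge0 : 0 <= d;
  reduced3_f_ge0 : 0 <= f;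
  reduced3_2d : 2 * d <= a;
  reduced3_2e : 2 * `|e| <= a;
  reduced3_2f : 2 * f <= b;
  reduced3_2def : 2 * (d - e + f) <= a + b }.

Lemma reduced3_det_ge a b c d e f :
  reduced3 a b c d e f -> a * b * c / 4%:R <= ternary_det a b c d e f.
Proof.
case=> a_gt0 le_ab le_bc d_ge0 f_ge0 le_2d le_2e le_2f le_2def; rewrite /ternary_det.
have [e_ge0 | e_lt0] := lerP 0 e.
- rewrite ger0_norm // in le_2e.
  have : 4%:R * d ^+ 2 <= a * b by nra.
  have : 4%:R * e ^+ 2 <= a * c by nra.
  have : 4%:R * f ^+ 2 <= b * c by nra.
  have : 0 <= d * e by nra.
  nra.
- rewrite ltr0_norm // in le_2e.
  have : 2 * d ^+ 2 <= a * d by nra.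
  have : 2 * e ^+ 2 <= - (a * e) by nra.
  have : 2 * f ^+ 2 <= c * f by nra.
  have : 4%:R * (d * - e) <= a * a by nra.
  have : a * c <= b * c by nra.
  have : 0 <= a * c by nra.
  nra.
Qed.

Lemma reduced3_ternary_ge a b c d e f x y z :
  reduced3 a b c d e f ->
  a / 100%:R * (x ^+ 2 + y ^+ 2 + z ^+ 2) <= ternary_form a b c d e f x y z.
Proof.
move=> red; have det_ge := reduced3_det_ge red.
case: red => a_gt0 le_ab le_bc d_ge0 f_ge0 le_2d _ _ _.
set k := a / 100%:R; rewrite -subr_ge0 ternary_form_shift.
have a_def : a = 100%:R * k by rewrite /k; field.
apply: ternary_form_ge0; first by lra.
  have : 4%:R * d ^+ 2 <= a * a by nra.
  have : 0 <= (a - k) * (b - a) by apply: mulr_ge0; lra.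
  rewrite a_def in a_gt0 *; nra.
have -> : ternary_det (a - k) (b - k) (c - k) d e f = ternary_det a b c d e f
    - k * (a * b - d ^+ 2 + a * c - e ^+ 2 + b * c - f ^+ 2) + k ^+ 2 * (a + b + c - k).
  by rewrite /ternary_det; ring.
have : 0 <= k ^+ 2 * (a + b + c - k) by rewrite mulr_ge0 ?sqr_ge0 //; lra.
have : k * (a * b + a * c + b * c) <= 3%:R * (a * b * c) / 100%:R.
  have : 0 <= a * b * (c - a) by rewrite !mulr_ge0 //; lra.
  have : 0 <= a * c * (b - a) by rewrite !mulr_ge0 //; lra.
  rewrite /k; lra.
have := sqr_ge0 d; have := sqr_ge0 e; have := sqr_ge0 f; nra.
Qed.

End TernaryForms.

Lemma sum3E (V : nmodType) (F : 'I_3 -> V) : \sum_(i < 3) F i = F i0 + F i1 + F i2.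
Proof.
by rewrite !big_ord_recl big_ord0 addr0 addrA; congr (F _ + F _ + F _); apply: val_inj.
Qed.

Lemma is_symmetric_mxE (R : realFieldType) g (Y : 'M[R]_g) i j :
  is_symmetric_mx Y -> Y j i = Y i j.
Proof. by move=> symY; rewrite -[in LHS]symY mxE. Qed.

Lemma qform3E (R : realFieldType) (Y : 'M[R]_3) (n : 'cV[R]_3) : is_symmetric_mx Y ->
  qform Y n = ternary_form (Y i0 i0) (Y i1 i1) (Y i2 i2) (Y i0 i1) (Y i0 i2) (Y i1 i2)
                           (n i0 0) (n i1 0) (n i2 0).
Proof.
move=> symY; rewrite /qform /ternary_form mxE sum3E !mxE !sum3E /= !mxE.
rewrite (is_symmetric_mxE i0 i1 symY) (is_symmetric_mxE i0 i2 symY).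
by rewrite (is_symmetric_mxE i1 i2 symY); ring.
Qed.

Lemma qform1_3 (R : realFieldType) (n : 'cV[R]_3) :
  qform 1%:M n = n i0 0 ^+ 2 + n i1 0 ^+ 2 + n i2 0 ^+ 2.
Proof. by rewrite qform3E; [rewrite /ternary_form /scalar_mx !mxE /=; ring | exact: trmx1]. Qed.

Definition v3 (x y z : int) : 'cV[int]_3 := \col_i nth 0 [:: x; y; z] i.

Lemma gcd_from_v3 j x y z :
  gcd_from j (v3 x y z) = \big[gcdz/0]_(0 <= k < 3 | (j <= k)%N) nth 0 [:: x; y; z] k.
Proof.
rewrite /gcd_from; under eq_bigr => k _ do rewrite mxE.
by rewrite -(big_mkord (fun k => (j <= k)%N) (fun k => nth 0 _ k)).
Qed.

Lemma qform_v3 (R : realFieldType) (Y : 'M[R]_3) x y z : is_symmetric_mx Y ->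
  qform Y (map_mx (fun t : int => t%:~R) (v3 x y z)) =
  ternary_form (Y i0 i0) (Y i1 i1) (Y i2 i2) (Y i0 i1) (Y i0 i2) (Y i1 i2)
               x%:~R y%:~R z%:~R.
Proof. by move=> symY; rewrite qform3E // !mxE. Qed.

Lemma minkowski_reduced3 (R : realFieldType) (Y : 'M[R]_3) :
  is_symmetric_mx Y -> posdefmx Y -> minkowski_reduced Y ->
  reduced3 (Y i0 i0) (Y i1 i1) (Y i2 i2) (Y i0 i1) (Y i0 i2) (Y i1 i2).
Proof.
move=> symY posY [minY adjY].
have min_v3 j x y z : gcd_from j (v3 x y z) = 1 ->
    Y j j <= ternary_form (Y i0 i0) (Y i1 i1) (Y i2 i2) (Y i0 i1) (Y i0 i2) (Y i1 i2)
                          x%:~R y%:~R z%:~R.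
  by move/minY; rewrite qform_v3.
have a_gt0 : 0 < Y i0 i0.
  have : map_mx (fun t : int => t%:~R) (v3 1 0 0) != 0 :> 'cV[R]_3.
    by apply/eqP => /matrixP/(_ i0 0)/eqP; rewrite !mxE oner_eq0.
  move/posY; rewrite qform_v3 // /ternary_form ?mulr0z ?mulr1z; lra.
have := min_v3 i0 0 1 0 ltac:(by rewrite gcd_from_v3 unlock).
have := min_v3 i1 0 0 1 ltac:(by rewrite gcd_from_v3 unlock).
have := min_v3 i1 (-1) 1 0 ltac:(by rewrite gcd_from_v3 unlock).
have := min_v3 i2 1 0 1 ltac:(by rewrite gcd_from_v3 unlock).
have := min_v3 i2 (-1) 0 1 ltac:(by rewrite gcd_from_v3 unlock).
have := min_v3 i2 0 (-1) 1 ltac:(by rewrite gcd_from_v3 unlock).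
have := min_v3 i2 1 (-1) 1 ltac:(by rewrite gcd_from_v3 unlock).
rewrite /ternary_form ?intrN ?mulr0z ?mulr1z => *.
have := adjY i0 i1 erefl; have := adjY i1 i2 erefl => f_ge0 d_ge0.
split; try lra.
by rewrite -ler_pdivlMl // ler_norml; apply/andP; split; lra.
Qed.

Theorem lemma2p3 (R : realFieldType) (Y : 'M[R]_3) :
  is_symmetric_mx Y -> posdefmx Y -> minkowski_reduced Y ->
  let c1 := Num.min (Num.min (Y i0 i0 - Y i0 i1 - `|Y i0 i2|)
                             (Y i1 i1 - Y i1 i0 - Y i1 i2))
                    (Y i2 i2 - Y i2 i1 - `|Y i2 i0|) in
  let c := Num.max c1 (Y i0 i0 / 100%:R) in
  forall n : 'cV[R]_3, c * qform 1%:M n <= qform Y n.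
Proof.
move=> symY posY minY c1 c n.
have red := minkowski_reduced3 symY posY minY.
rewrite qform1_3 qform3E // /c /c1 (is_symmetric_mxE i0 i1 symY).
rewrite (is_symmetric_mxE i1 i2 symY) (is_symmetric_mxE i0 i2 symY).
rewrite maxr_pMl ?addr_ge0 ?sqr_ge0 // ge_max reduced3_ternary_ge // andbT.
apply: ternary_form_ge_diag; rewrite ?ge_min ?lexx ?orbT //.
- exact: reduced3_d_ge0 red.
- exact: reduced3_f_ge0 red.
Qed.
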